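(* Let $\Phi=\forall u_1\ldots\forall u_n\exists e_1(D_1)\ldots\exists e_m(D_m).\varphi$ be a DQBF with prefix $\mathcal{Q}$, let $A$ be a set of arbiter variables with arbiter clauses $\varphi_A$, and let $C_1,\ldots,C_k$ be clauses such that for each $i$, $C_i$ is a forcing clause in $\varphi\wedge\varphi_A\wedge\bigwedge_{1\le j<i}C_j$. Then the DQBF $\mathcal{Q}\exists A(\emptyset).\varphi\wedge\varphi_A\wedge\bigwedge_{1\le i\le k}C_i$ is true if and only if $\Phi$ is true.
   Context: For a set $V$ of variables, $[V]$ is the set of assignments $V\to\{\textsc{true},\textsc{false}\}$; assignments are identified with terms of the literals they make true, $\neg\sigma$ is the clause of the negations of these literals, and $\sigma|_W$ denotes restriction to (the part of the domain lying in) $W$. A DQBF is $\forall u_1\ldots\forall u_n\exists e_1(D_1)\ldots\exists e_m(D_m).\varphi$ with pairwise distinct variables, $U=\{u_i\}$, $E=\{e_j\}$, dependency sets $D(e_j)=D_j\subseteq U$, and $\varphi$ a CNF over $U\cup E$; a model is a family $F=(F_e)_{e}$ with $F_e:[D(e)]\to\{\textsc{true},\textsc{false}\}$ such that for every $\sigma\in[U]$, $\sigma\cup F(\sigma)$ satisfies the matrix, where $F(\sigma)$ assigns each existential $e$ the value $F_e(\sigma|_{D(e)})$; the DQBF is true iff it has a model. Arbiter variables: for $e\in E$, $\sigma\in[D(e)]$, $e^\sigma$ is a fresh variable; for a set $A$ of them, $\varphi_A=\bigwedge_{e^\sigma\in A}\big((e^\sigma\vee\neg\sigma\vee\neg e)\wedge(\neg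 e^\sigma\vee\neg\sigma\vee e)\big)$. For a CNF $\psi$, $\mathcal{Q}\exists A(\emptyset).\psi$ is the DQBF whose prefix is that of $\Phi$ extended by every variable of $A$ as an existential variable with empty dependency set, and whose matrix is $\psi$. Forcing: let $\ell$ be a literal on a variable in $E$, $\psi$ a formula with $\mathit{var}(\psi)\subseteq U\cup E\cup A$, and $\sigma$ a partial assignment to $U\cup A$; $\ell$ is forced by $\sigma$ in $\psi$ if $\psi\wedge\sigma\wedge\neg\ell$ is unsatisfiable, and in that case $\neg(\sigma|_{D(\mathit{var}(\ell))\cup A})\vee\ell$ is called a forcing clause in $\psi$. *)

From mathcomp Require Import all_boot.
Set Implicit Arguments. Unset Strict Implicit. Unset Printing Implicit Defensive.

(* A literal is a pair (variable, polarity): (x, true) is x, (x, false) is ~x. *)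
Definition lit (T : Type) := (T * bool)%type.
Definition clause (T : Type) := seq (lit T).
Definition cnf (T : Type) := seq (clause T).

Definition sat_lit (T : Type) (t : T -> bool) (l : lit T) : bool := t l.1 == l.2.
Definition sat_clause (T : Type) (t : T -> bool) (C : clause T) : bool :=
  has (sat_lit t) C.
Definition sat (T : Type) (t : T -> bool) (phi : cnf T) : bool :=
  all (sat_clause t) phi.

(* Partial assignments: {ffun T -> option bool}; domain = where it is Some. *)
Definition pdom (T : finType) (s : {ffun T -> option bool}) : {set T} :=
  [set x | s x != None].

Definition restrict (T : finType) (s : {ffun T -> option bool}) (W : {set T})
  : {ffun T -> option bool} :=
  [ffun x => if x \in W then s x else None].

Definition negclause (T : finType) (s : {ffun T -> option bool}) : clause T :=
  pmap (fun x => omap (fun b => (x, ~~ b)) (s x)) (enum T).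

(* A model assigns to every existential e a Skolem function
   F e : [D e] -> bool, encoded as a function of total assignments that only
   depends on the values on D e.  Given sigma in [U] (a total assignment of
   which only the U-part is used), sigma \cup F(sigma) is the assignment
   below (variables outside U \cup E, which do not occur, get false). *)
Definition dqbf_true (T : finType) (U E : {set T}) (D : T -> {set T})
  (phi : cnf T) : Prop :=
  exists F : T -> {ffun T -> bool} -> bool,
    (forall e, e \in E -> forall s s' : {ffun T -> bool},
        {in D e, s =1 s'} -> F e s = F e s') /\
    (forall s : {ffun T -> bool},
        sat (fun x => if x \in E then F x s else if x \in U then s x else false)
            phi).

(* An arbiter variable e^sigma is indexed by e and sigma in [D(e)], the latter
   encoded as a partial assignment on V with domain exactly D(e).  Arbiter
   variables live in the right summand of the extended variable type, which
   makes them fresh. *)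
Definition arb (V : finType) := (V * {ffun V -> option bool})%type.
Definition xvar (V : finType) := (V + arb V)%type.

Definition lift_lit (V : finType) (l : lit V) : lit (xvar V) := (inl l.1, l.2).
Definition lift_cnf (V : finType) (phi : cnf V) : cnf (xvar V) :=
  map (map (@lift_lit V)) phi.

Definition valid_arbiters (V : finType) (E : {set V}) (D : V -> {set V})
  (A : {set arb V}) : Prop :=
  forall a, a \in A -> a.1 \in E /\ pdom a.2 = D a.1.

(* (e^s \/ ~s \/ ~e) /\ (~e^s \/ ~s \/ e) *)
Definition arbiter_clauses_of (V : finType) (a : arb V) : cnf (xvar V) :=
  [:: (inr a, true) :: map (@lift_lit V) (negclause a.2) ++ [:: (inl a.1, false)];
      (inr a, false) :: map (@lift_lit V) (negclause a.2) ++ [:: (inl a.1, true)]].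

Definition arbiter_clauses (V : finType) (A : {set arb V}) : cnf (xvar V) :=
  flatten (map (@arbiter_clauses_of V) (enum A)).

Definition forcing_clause (V : finType) (U E : {set V}) (D : V -> {set V})
  (A : {set arb V}) (psi : cnf (xvar V)) (C : clause (xvar V)) : Prop :=
  exists (e : V) (b : bool) (s : {ffun xvar V -> option bool}),
    [/\ e \in E,
        pdom s \subset (inl @: U) :|: (inr @: A),
        (forall t : {ffun xvar V -> bool},
            (forall x c, s x = Some c -> t x = c) ->
            sat t psi -> sat_lit t (inl e, b))
      & C =i (inl e, b) :: negclause (restrict s ((inl @: D e) :|: (inr @: A)))].

Definition xdep (V : finType) (D : V -> {set V}) (x : xvar V) : {set xvar V} :=
  match x with
  | inl v => inl @: D v
  | inr _ => set0
  end.

From mathcomp Require Import all_boot.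
Set Implicit Arguments. Unset Strict Implicit. Unset Printing Implicit Defensive.

(* A model of the extended DQBF restricts to a model of [phi], since [phi] is
   part of its matrix.  Conversely, a model F of [phi] extends to the arbiters
   by e^sigma := F_e(sigma), which satisfies the arbiter clauses.  A forcing
   clause then holds in every Skolem assignment that satisfies the formula it
   is derived from: if its premise ~(sigma|_(D(e) u A)) is false, overwrite the
   universals by sigma; arbiters are constants of the model, so the new
   assignment extends sigma and forces the literal, and its value on e is
   unchanged because only universals outside D(e) were modified. *)

Definition skolem_dep (T : finType) (E : {set T}) (D : T -> {set T})
    (F : T -> {ffun T -> bool} -> bool) : Prop :=
  forall e, e \in E -> forall s s' : {ffun T -> bool},
    {in D e, s =1 s'} -> F e s = F e s'.

Definition skolem_asg (T : finType) (U E : {set T})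
    (F : T -> {ffun T -> bool} -> bool) (s : {ffun T -> bool}) (x : T) : bool :=
  if x \in E then F x s else if x \in U then s x else false.

Lemma dqbf_trueP (T : finType) (U E : {set T}) (D : T -> {set T}) (phi : cnf T) :
  dqbf_true U E D phi <->
  exists2 F, skolem_dep E D F & forall s, sat (skolem_asg U E F s) phi.
Proof. by split=> [[F [Fdep Fsat]] | [F Fdep Fsat]]; exists F. Qed.

Lemma eq_sat (T : Type) (t t' : T -> bool) (phi : cnf T) :
  t =1 t' -> sat t phi = sat t' phi.
Proof. by move=> tt'; apply: eq_all => C; apply: eq_has => l; rewrite /sat_lit tt'. Qed.

Lemma sat_cat (T : Type) (t : T -> bool) (phi psi : cnf T) :
  sat t (phi ++ psi) = sat t phi && sat t psi.
Proof. exact: all_cat. Qed.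

Lemma sat_rcons (T : Type) (t : T -> bool) (phi : cnf T) (C : clause T) :
  sat t (rcons phi C) = sat_clause t C && sat t phi.
Proof. exact: all_rcons. Qed.

Lemma sat_flatten (T S : Type) (t : T -> bool) (f : S -> cnf T) (r : seq S) :
  sat t (flatten (map f r)) = all (fun a => sat t (f a)) r.
Proof. by elim: r => //= a r IHr; rewrite sat_cat IHr. Qed.

Lemma sat_lift_cnf (V : finType) (t : xvar V -> bool) (phi : cnf V) :
  sat t (lift_cnf phi) = sat (fun v => t (inl v)) phi.
Proof. by rewrite /sat all_map; apply: eq_all => C; rewrite /= /sat_clause has_map. Qed.

Lemma mem_negclause (T : finType) (s : {ffun T -> option bool}) x b :
  s x = Some b -> (x, ~~ b) \in negclause s.
Proof. by move=> sx; rewrite mem_pmap; apply/mapP; exists x; rewrite ?mem_enum ?sx. Qed.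

Lemma negclause_falseP (T : finType) (s : {ffun T -> option bool}) (t : T -> bool) :
  ~~ sat_clause t (negclause s) -> forall x b, s x = Some b -> t x = b.
Proof.
move=> /hasPn tF x b /mem_negclause/tF.
by rewrite /sat_lit /=; case: (t x); case: b.
Qed.

Section SumSets.

Variables (A B : finType) (S : {set A}) (T : {set B}).

Lemma inl_in_imset_inl x : (inl x \in (inl @: S : {set A + B})) = (x \in S).
Proof. exact: (mem_imset _ _ inl_inj). Qed.

Lemma inl_in_imset_inr x : (inl x \in (inr @: T : {set A + B})) = false.
Proof. by apply/imsetP => -[]. Qed.

Lemma inr_in_imset_inl y : (inr y \in (inl @: S : {set A + B})) = false.
Proof. by apply/imsetP => -[]. Qed.

Lemma inl_in_setU_imset x :
  (inl x \in (inl @: S :|: inr @: T : {set A + B})) = (x \in S).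
Proof. by rewrite in_setU inl_in_imset_inl inl_in_imset_inr orbF. Qed.

Lemma inr_in_setU_imset y :
  (inr y \in (inl @: S :|: inr @: T : {set A + B})) = (y \in T).
Proof. by rewrite in_setU inr_in_imset_inl (mem_imset _ _ inr_inj). Qed.

End SumSets.

Section Arbiters.

Variables (V : finType) (U E : {set V}) (D : V -> {set V}) (A : {set arb V}).

Local Notation Ux := (inl @: U : {set xvar V}).
Local Notation Ex := ((inl @: E) :|: (inr @: A) : {set xvar V}).

Definition proj_asg (s : {ffun xvar V -> bool}) : {ffun V -> bool} :=
  [ffun v => s (inl v)].

(* The values chosen for the arbiters in the lifted assignment are irrelevant. *)
Definition lift_asg (s : {ffun V -> bool}) : {ffun xvar V -> bool} :=
  [ffun x => if x is inl v then s v else false].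

Lemma dqbf_true_unlift (phi : cnf V) (psi : cnf (xvar V)) :
  dqbf_true Ux Ex (xdep D) (lift_cnf phi ++ psi) -> dqbf_true U E D phi.
Proof.
move=> /dqbf_trueP[G G_dep G_sat]; apply/dqbf_trueP.
exists (fun e s => G (inl e) (lift_asg s)).
  move=> e eE s s' ss'; apply: G_dep; first by rewrite inl_in_setU_imset.
  by move=> _ /imsetP[v vDe ->]; rewrite !ffunE ss'.
move=> s; move: (G_sat (lift_asg s)); rewrite sat_cat sat_lift_cnf => /andP[+ _].
apply: etrans; apply: eq_sat => v.
by rewrite /skolem_asg inl_in_setU_imset inl_in_imset_inl ffunE.
Qed.

Hypothesis UE_disjoint : [disjoint U & E].
Hypothesis D_sub_U : forall e, e \in E -> D e \subset U.

Section ExtendedModel.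

Variable G : xvar V -> {ffun xvar V -> bool} -> bool.
Hypothesis G_dep : skolem_dep Ex (xdep D) G.

Local Notation t := (skolem_asg Ux Ex G).

Lemma ext_asg_univ (s : {ffun xvar V -> bool}) u :
  u \in U -> t s (inl u) = s (inl u).
Proof.
move=> uU; rewrite /skolem_asg inl_in_setU_imset inl_in_imset_inl.
by rewrite (disjointFr UE_disjoint uU) uU.
Qed.

Lemma ext_asg_arb (s s' : {ffun xvar V -> bool}) a :
  a \in A -> t s (inr a) = t s' (inr a).
Proof.
move=> aA; rewrite /skolem_asg inr_in_setU_imset aA.
by apply: G_dep => [|x]; rewrite ?inr_in_setU_imset ?inE.
Qed.

Lemma ext_asg_exist (s s' : {ffun xvar V -> bool}) e : e \in E ->
  {in D e, forall v, s (inl v) = s' (inl v)} -> t s (inl e) = t s' (inl e).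
Proof.
move=> eE ss'; rewrite /skolem_asg inl_in_setU_imset eE.
by apply: G_dep; rewrite ?inl_in_setU_imset // => _ /imsetP[v vDe ->]; apply: ss'.
Qed.

Lemma forcing_clause_sound (psi : cnf (xvar V)) (C : clause (xvar V)) :
  (forall s, sat (t s) psi) -> forcing_clause U E D A psi C ->
  forall s, sat_clause (t s) C.
Proof.
move=> psi_sat [e [b [sg [eE sg_dom forced C_eq]]]] s.
rewrite /sat_clause (eq_has_r C_eq) /=.
apply/orP; case: (boolP (has _ _)) => [|premise_false]; [by right | left].
have agree := negclause_falseP premise_false.
have agree_in x c : x \in (inl @: D e) :|: (inr @: A) -> sg x = Some c -> t s x = c.
  by move=> xDA sgx; apply: agree; rewrite ffunE xDA.
pose s' : {ffun xvar V -> bool} := [ffun x => if sg x is Some c then c else s x].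
have s'_ext x c : sg x = Some c -> t s' x = c.
  move=> sgx; have : x \in pdom sg by rewrite inE sgx.
  move=> /(subsetP sg_dom); rewrite in_setU => /orP[] /imsetP[y yS x_eq]; subst x.
    by rewrite ext_asg_univ // ffunE sgx.
  rewrite (ext_asg_arb _ s) //; apply: agree_in sgx.
  by rewrite inr_in_setU_imset.
have s'_De : {in D e, forall v, s' (inl v) = s (inl v)}.
  move=> v vDe; rewrite ffunE; case sgv: (sg (inl v)) => [c|] //.
  rewrite -ext_asg_univ ?(subsetP (D_sub_U eE)) //; apply/esym/(agree_in _ _ _ sgv).
  by rewrite inl_in_setU_imset.
have t_s'E : [ffun x => t s' x] =1 t s' by move=> x; rewrite ffunE.
have forced_s' : sat_lit [ffun x => t s' x] (inl e, b).
  apply: forced => [x c sgx|]; first by rewrite t_s'E; apply: s'_ext.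
  rewrite (eq_sat _ t_s'E); exact: psi_sat.
change (t s (inl e) == b); rewrite -(ext_asg_exist eE s'_De) -t_s'E; exact: forced_s'.
Qed.

Lemma forcing_chain_sound (psi : cnf (xvar V)) (Cs : seq (clause (xvar V))) :
  (forall s, sat (t s) psi) ->
  (forall i, i < size Cs ->
     forcing_clause U E D A (psi ++ take i Cs) (nth [::] Cs i)) ->
  forall s, sat (t s) (psi ++ Cs).
Proof.
move=> psi_sat forcing.
suff prefix_sat i : i <= size Cs -> forall s, sat (t s) (psi ++ take i Cs).
  by move=> s; have := prefix_sat _ (leqnn _) s; rewrite take_size.
elim: i => [|i IHi] i_lt s; first by rewrite take0 cats0.
rewrite (take_nth [::] i_lt) -rcons_cat sat_rcons (IHi (ltnW i_lt)) andbT.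
exact: (forcing_clause_sound (IHi (ltnW i_lt)) (forcing i i_lt)).
Qed.

End ExtendedModel.

Definition arbiter_asg (a : arb V) : {ffun V -> bool} := [ffun v => odflt false (a.2 v)].

Definition arbiter_ext (F : V -> {ffun V -> bool} -> bool) (x : xvar V)
    (s : {ffun xvar V -> bool}) : bool :=
  match x with
  | inl e => F e (proj_asg s)
  | inr a => F a.1 (arbiter_asg a)
  end.

Section ArbiterExtension.

Variable F : V -> {ffun V -> bool} -> bool.
Hypothesis F_dep : skolem_dep E D F.

Local Notation t := (skolem_asg Ux Ex (arbiter_ext F)).

Lemma arbiter_ext_dep : skolem_dep Ex (xdep D) (arbiter_ext F).
Proof.
case=> [e | a] //= eE s s' ss'; rewrite inl_in_setU_imset in eE.
by apply: F_dep => // v vDe; rewrite !ffunE ss' // inl_in_imset_inl.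
Qed.

Lemma arbiter_ext_inl s v : t s (inl v) = skolem_asg U E F (proj_asg s) v.
Proof. by rewrite /skolem_asg inl_in_setU_imset inl_in_imset_inl /proj_asg ffunE. Qed.

Lemma arbiter_ext_inr s a : a \in A -> t s (inr a) = F a.1 (arbiter_asg a).
Proof. by move=> aA; rewrite /skolem_asg inr_in_setU_imset aA. Qed.

Lemma arbiter_clauses_sat s : valid_arbiters E D A -> sat (t s) (arbiter_clauses A).
Proof.
move=> validA; rewrite sat_flatten; apply/allP => a; rewrite mem_enum => aA.
have [a1E dom_a] := validA a aA.
rewrite /arbiter_clauses_of /sat /= /sat_clause /= !has_cat !has_map /=.
case premise: (has (preim _ _) _); first by rewrite /= !orbT.
have agree := negclause_falseP (t := fun v => t s (inl v)) (negbT premise).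
rewrite /sat_lit /=; suff -> : t s (inr a) = t s (inl a.1) by case: (t s (inl a.1)).
rewrite arbiter_ext_inr // arbiter_ext_inl /skolem_asg a1E.
apply: F_dep => // v vDa; rewrite !ffunE.
have : v \in pdom a.2 by rewrite dom_a.
rewrite inE; case a2v: (a.2 v) => [c|] //= _.
have vU := subsetP (D_sub_U a1E) v vDa.
by rewrite -(ext_asg_univ (arbiter_ext F) s vU) (agree _ _ a2v).
Qed.

End ArbiterExtension.

Lemma dqbf_true_arbiter_ext (phi : cnf V) : valid_arbiters E D A ->
  dqbf_true U E D phi -> dqbf_true Ux Ex (xdep D) (lift_cnf phi ++ arbiter_clauses A).
Proof.
move=> validA /dqbf_trueP[F F_dep F_sat]; apply/dqbf_trueP.
exists (arbiter_ext F); first exact: arbiter_ext_dep.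
move=> s; rewrite sat_cat arbiter_clauses_sat // andbT sat_lift_cnf.
by rewrite (eq_sat _ (arbiter_ext_inl F s)).
Qed.

End Arbiters.

Theorem corollary3 (V : finType) (U E : {set V}) (D : V -> {set V})
  (phi : cnf V) (A : {set arb V}) (Cs : seq (clause (xvar V))) :
  (* well-formed DQBF prefix and matrix *)
  [disjoint U & E] ->
  (forall e, e \in E -> D e \subset U) ->
  (forall C l, C \in phi -> l \in C -> l.1 \in U :|: E) ->
  (* A is a set of arbiter variables *)
  valid_arbiters E D A ->
  (* each C_i is a forcing clause in phi /\ phi_A /\ C_1 /\ ... /\ C_{i-1} *)
  (forall i, i < size Cs ->
     forcing_clause U E D A
       (lift_cnf phi ++ arbiter_clauses A ++ take i Cs) (nth [::] Cs i)) ->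
  dqbf_true (inl @: U) ((inl @: E) :|: (inr @: A)) (xdep D)
            (lift_cnf phi ++ arbiter_clauses A ++ Cs)
  <-> dqbf_true U E D phi.
Proof.
move=> UE_disjoint D_sub_U _ validA forcing; split; first exact: dqbf_true_unlift.
move=> /(dqbf_true_arbiter_ext UE_disjoint D_sub_U validA)/dqbf_trueP[G G_dep G_sat].
apply/dqbf_trueP; exists G => // s; rewrite catA.
apply: (forcing_chain_sound UE_disjoint D_sub_U G_dep) => // i i_lt.
by rewrite -catA; apply: forcing.
Qed.
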